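(* Let $\omega$ be a Kähler form with constant coefficients on $\mathbb{C}^n$ and let $\alpha$ be a real $(1,1)$-form with constant coefficients on $\mathbb{C}^n$ which is $m$-positive with respect to $\omega$, for some $1\le m\le n$. Then: (1) for every $1\le k\le m-1$ and every complex hyperplane $H\subset\mathbb{C}^n$, $\alpha|_H^k\wedge\omega|_H^{n-k-1}>0$ on $H$; (2) if $m\le n-1$ and moreover $\alpha$ is semipositive, then there is a proper complex linear subspace $S(\alpha)\subsetneq\mathbb{C}^n$ such that for every $v\in\mathbb{C}^n\setminus S(\alpha)$ we have $\alpha|_{H_v}^m\wedge\omega|_{H_v}^{n-m-1}>0$ on $H_v$, where $H_v=\{z\in\mathbb{C}^n : \sum_i v_iz_i=0\}$.
   Context: A real $(1,1)$-form $\alpha$ with constant coefficients is called $m$-positive with respect to $\omega$ if $\alpha^k\wedge\omega^{n-k}>0$ (i.e. a positive multiple of the standard volume form) for every $1\le k\le m$. For a top-degree form on a hyperplane $H$, ''$>0$'' means it is a positive multiple of a volume form of $H$ with its canonical orientation. $\alpha|_H$ denotes the restriction (pullback) to $H$. Semipositive means positive semidefinite. *)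

From mathcomp Require Import all_boot all_order all_algebra.
From mathcomp Require Import complex.
From mathcomp Require Import reals.
Set Implicit Arguments. Unset Strict Implicit. Unset Printing Implicit Defensive.
Import Order.TTheory GRing.Theory Num.Theory.
Local Open Scope ring_scope.

(* A real (1,1)-form with constant coefficients
   on C^p,  a = i * sum_{j,k} A j k dz_j /\ dzbar_k,  is encoded by its
   coefficient matrix A : 'M[C]_p; reality of the form means A^T = conj A
   (A is Hermitian). *)

Section Forms.
Variable R : realType.
Local Notation C := (complex R).

Definition conjm p q (M : 'M[C]_(p, q)) : 'M[C]_(p, q) := map_mx Num.conj M.

Definition real11 p (A : 'M[C]_p) : Prop := A^T = conjm A.

Definition hform p (A : 'M[C]_p) (xi : 'cV[C]_p) : C :=
  (xi^T *m A *m conjm xi) 0 0.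

Definition kahler p (W : 'M[C]_p) : Prop :=
  real11 W /\ forall xi : 'cV[C]_p, xi != 0 -> 0 < hform W xi.

Definition semipositive p (A : 'M[C]_p) : Prop :=
  real11 A /\ forall xi : 'cV[C]_p, 0 <= hform A xi.

(* The coefficient c of  a^k /\ w^(p-k) = c * vol,  where
   vol = prod_j (i dz_j /\ dzbar_j) is the standard (canonically oriented)
   volume form.  Expanding (w + t a)^p = p! det(W + t A) vol gives
   a^k /\ w^(p-k) = k! (p-k)! [t^k] det(W + t A) vol. *)
Definition wedge_coef p (k : nat) (A W : 'M[C]_p) : C :=
  (k`! * (p - k)`!)%:R *
  (\det (map_mx polyC W + 'X *: map_mx polyC A))`_k.

Definition m_positive p (m : nat) (W A : 'M[C]_p) : Prop :=
  forall k, (1 <= k <= m)%N -> 0 < wedge_coef k A W.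

(* Pull-back of the form with matrix A along the linear map C^q -> C^p,
   w |-> B w (e.g. B = a basis of a subspace H, as columns):
   z = B w gives  sum A j k dz_j dzbar_k = sum (B^T A conj B) l l' dw_l dwbar_l'. *)
Definition restr p q (B : 'M[C]_(p, q)) (A : 'M[C]_p) : 'M[C]_q :=
  B^T *m A *m conjm B.

End Forms.

From mathcomp Require Import all_boot all_order all_algebra.
From mathcomp Require Import complex reals spectral sesquilinear.
From mathcomp Require Import ring lra zify.
Set Implicit Arguments. Unset Strict Implicit. Unset Printing Implicit Defensive.
Import Order.TTheory GRing.Theory Num.Theory.
Local Open Scope ring_scope.

(* Simultaneously diagonalise: [W = Q^T conj Q] and [A = Q^T diag(l) conj Q],
   so that [det (W + t A) = |det Q|^2 prod_i (1 + l_i t)] and m-positivity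
   says that the elementary symmetric functions [sigma_k(l)], [k <= m], are
   positive.  Restricting to a hyperplane [ker v], a cofactor expansion gives
   [det (W|H + t A|H) = c sum_i |z_i|^2 prod_(j != i) (1 + l_j t)] with
   [z = v Q^-1] and [c > 0].
   (1) is then Garding's fact that deleting one entry of [l] keeps
   [sigma_k > 0] for [k < m]; it follows from Newton's inequalities, which
   follow by induction from the real-rootedness of the derivative of
   [prod_i (s + l_i)], itself obtained by restricting [diag(l)] to the
   hyperplane orthogonal to [(1, ..., 1)].
   (2) For [l >= 0], [sigma_k(l) > 0] iff [k] is at most the number of positive
   [l_i]; so [sigma_m] of [l] minus [l_i] stays positive unless exactly [m] of
   the [l_i] are positive and [l_i] is one of them.  The coefficient therefore
   vanishes only when [z] is supported on the positive [l_i], i.e. when [v]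
   lies in a subspace of dimension [m < n]. *)

Lemma big_neq_lift (T : Type) (idx : T) (op : Monoid.com_law idx) n (i : 'I_n)
    (F : 'I_n -> T) :
  \big[op/idx]_(j | j != i) F j = \big[op/idx]_(j < n.-1) F (lift i j).
Proof.
rewrite big_mkcond (bigD1_ord i) //= eqxx Monoid.mul1m.
by apply: eq_bigr => j _; rewrite eq_sym neq_lift.
Qed.

Lemma lift_eqF n (h : 'I_n) (i : 'I_n.-1) : (lift h i == h) = false.
Proof. by rewrite eq_sym (negbTE (neq_lift _ _)). Qed.

Lemma matrix_neq0_entry (T : nmodType) m n (M : 'M[T]_(m, n)) :
  M != 0 -> exists i j, M i j != 0.
Proof.
move=> M_neq0; have [[i j] /= Mij|M0] := pickP (fun ij : 'I_m * 'I_n => M ij.1 ij.2 != 0).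
  by exists i, j.
by case/eqP: M_neq0; apply/matrixP => i j; rewrite mxE; apply/eqP/negbFE/(M0 (i, j)).
Qed.

Section DeterminantLemmas.
Variable T : comNzRingType.

Lemma row'_mulmx m n p (i : 'I_m) (A : 'M[T]_(m, n)) (B : 'M[T]_(n, p)) :
  row' i (A *m B) = row' i A *m B.
Proof. by apply/matrixP => a b; rewrite !mxE; apply: eq_bigr => k _; rewrite !mxE. Qed.

Lemma col'_mulmx m n p (j : 'I_p) (A : 'M[T]_(m, n)) (B : 'M[T]_(n, p)) :
  col' j (A *m B) = A *m col' j B.
Proof. by apply/matrixP => a b; rewrite !mxE; apply: eq_bigr => k _; rewrite !mxE. Qed.

Lemma expand_det_row_delta n (M : 'M[T]_n.+1) i :
  (forall j, j != i -> M i j = 0) -> \det M = M i i * \det (row' i (col' i M)).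
Proof.
move=> Mi0; rewrite (expand_det_row _ i) (bigD1 i) //= big1 ?addr0.
  by rewrite /cofactor -signr_odd addnn odd_double mul1r.
by move=> j /Mi0 ->; rewrite mul0r.
Qed.

Lemma det_add_delta_max n (Y : 'M[T]_n.+1) :
  \det (Y + delta_mx ord_max ord_max) =
  \det Y + \det (row' ord_max (col' ord_max Y)).
Proof.
pose E := \matrix_(i, j) (if i == ord_max then (j == ord_max)%:R else Y i j).
rewrite (@determinant_multilinear _ _ _ Y E ord_max 1 1).
- rewrite !mul1r (@expand_det_row_delta _ E ord_max); last first.
    by move=> j /negbTE jn; rewrite mxE eqxx jn.
  rewrite mxE !eqxx mul1r; congr (_ + \det _).
  by apply/matrixP => a b; rewrite !mxE lift_eqF.
- by apply/rowP => j; rewrite !mxE eqxx !mul1r.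
- by apply/matrixP => a b; rewrite !mxE lift_eqF addr0.
- by apply/matrixP => a b; rewrite /E !mxE lift_eqF addr0.
Qed.

Lemma det_diag_last_row n (d : 'I_n.+1 -> T) (a b : 'I_n.+1 -> T) :
  \det (\matrix_(i, j) (if i == ord_max then b j
                        else (i == j)%:R * d i + a i * b j)) =
  b ord_max * \prod_(i | i != ord_max) d i.
Proof.
(* [L] adds [a_i] times the last row to row [i]; both factors are triangular. *)
pose L := \matrix_(i, j) ((i == j)%:R + (j == ord_max)%:R * (i != ord_max)%:R * a i)
  : 'M[T]_n.+1.
pose D := \matrix_(i, j) (if i == ord_max then b j else (i == j)%:R * d i)
  : 'M[T]_n.+1.
have lt_max (i j : 'I_n.+1) : (i < j)%N -> (i == ord_max) = false.
  by move=> ij; apply/negbTE; rewrite -val_eqE /=; have := ltn_ord j; lia.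
have -> : \matrix_(i, j) (if i == ord_max then b j
                          else (i == j)%:R * d i + a i * b j) = L *m D.
  apply/matrixP => i j; rewrite !mxE.
  under eq_bigr do rewrite !mxE mulrDl.
  rewrite big_split /= (bigD1 i) //= (bigD1 ord_max (P := xpredT)) //= !eqxx.
  rewrite !big1 ?addr0 => [|k /negbTE->|k]; rewrite ?mul0r //; last first.
    by rewrite eq_sym => /negbTE ->; rewrite mul0r.
  by case: eqP => _; rewrite /= ?mulr1n ?mul1r ?mulr0n ?mulr0 ?mul0r ?addr0.
rewrite det_mulmx -det_tr !det_trig.
- rewrite big1 ?mul1r => [|i _]; last first.
    by rewrite !mxE eqxx; case: (i == ord_max); rewrite ?mulr0 ?mul0r ?addr0.
  rewrite (bigD1 ord_max) //= mxE eqxx; congr (_ * _).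
  by apply: eq_bigr => i /negbTE ij; rewrite mxE ij eqxx mul1r.
- apply/is_trig_mxP => i j ij; rewrite mxE (lt_max _ _ ij).
  by rewrite -val_eqE /= (ltn_eqF ij) mul0r.
- apply/is_trig_mxP => i j ij; rewrite !mxE (lt_max _ _ ij).
  by rewrite -val_eqE /= (gtn_eqF ij) !mul0r add0r.
Qed.

Lemma det_diag_rank1 n (d a b : 'I_n -> T) :
  \det (\matrix_(i, j) ((i == j)%:R * d i + a i * b j)) =
  \prod_i d i + \sum_i a i * b i * \prod_(j | j != i) d j.
Proof.
elim: n d a b => [|n IH] d a b; first by rewrite det_mx00 !big_ord0 addr0.
set M := \matrix_(i, j) _.
pose M1 := \matrix_(i, j) (if i == ord_max then (i == j)%:R * d i else M i j).
pose M2 := \matrix_(i, j) (if i == ord_max then b j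
                            else (i == j)%:R * d i + a i * b j).
rewrite (@determinant_multilinear _ _ M M1 M2 ord_max 1 (a ord_max)); first last.
- by apply/matrixP => i j; rewrite /M2 !mxE lift_eqF.
- by apply/matrixP => i j; rewrite /M1 !mxE lift_eqF.
- by apply/rowP => j; rewrite /M1 /M2 !mxE eqxx mul1r.
rewrite mul1r det_diag_last_row (@expand_det_row_delta _ M1 ord_max); last first.
  by move=> j; rewrite /M1 mxE eqxx eq_sym => /negbTE ->; rewrite mul0r.
have -> : row' ord_max (col' ord_max M1) =
    \matrix_(i, j) ((i == j)%:R * d (lift ord_max i) +
                    a (lift ord_max i) * b (lift ord_max j)).
  by apply/matrixP => i j; rewrite !mxE lift_eqF (inj_eq lift_inj).
have prod_neq_lift (i : 'I_n) : \prod_(j | j != lift ord_max i) d j =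
    d ord_max * \prod_(j < n | j != i) d (lift ord_max j).
  rewrite (bigD1_ord ord_max) ?neq_lift //=; congr (_ * _).
  by apply: eq_bigl => j; rewrite (inj_eq lift_inj).
rewrite IH /M1 mxE !eqxx mul1r (bigD1_ord ord_max (P := xpredT)) //=.
rewrite (bigD1_ord ord_max (P := xpredT)) //=.
under [X in _ = _ + (_ + X)]eq_bigr do rewrite prod_neq_lift mulrCA.
by rewrite -mulr_sumr; ring.
Qed.
End DeterminantLemmas.

Section HyperplaneBasis.
Variables (F : fieldType) (p : nat) (B : 'M[F]_(p.+1, p)).
Hypothesis rankB : \rank B = p.

Lemma hyperplane_basis_inj (w : 'cV[F]_p) : B *m w = 0 -> w = 0.
Proof.
move=> Bw0; apply: trmx_inj; apply/eqP; rewrite trmx0 -(mulmx_free_eq0 _ (B := B^T)).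
  by rewrite -trmx_mul Bw0 trmx0.
by rewrite /row_free mxrank_tr rankB.
Qed.

Lemma hyperplane_normal : exists2 v : 'rV[F]_p.+1, v != 0 & v *m B = 0.
Proof.
exists (nz_row (kermx B)); last exact/sub_kermxP/nz_row_sub.
by rewrite nz_row_eq0 -mxrank_eq0 mxrank_ker rankB subSnn.
Qed.
End HyperplaneBasis.

Section ElementarySymmetric.
Variable R : realFieldType.

Definition elem_sym_poly n (mu : 'I_n -> R) : {poly R} := \prod_(i < n) (1 + mu i *: 'X).

Definition elem_sym n (mu : 'I_n -> R) k := (elem_sym_poly mu)`_k.

Definition count_pos n (mu : 'I_n -> R) := (\sum_(i < n) nat_of_bool (0 < mu i)%R)%N.

Lemma eq_elem_sym n (mu nu : 'I_n -> R) k : mu =1 nu -> elem_sym mu k = elem_sym nu k.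
Proof. by move=> eq_mu; rewrite /elem_sym /elem_sym_poly; under eq_bigr do rewrite eq_mu. Qed.

Lemma elem_sym0 n (mu : 'I_n -> R) : elem_sym mu 0 = 1.
Proof.
rewrite /elem_sym /elem_sym_poly -horner_coef0 horner_prod.
by apply: big1 => i _; rewrite hornerD hornerZ hornerX mulr0 addr0 hornerC.
Qed.

Lemma elem_sym_lift n (mu : 'I_n.+1 -> R) (i : 'I_n.+1) k :
  elem_sym mu k.+1 = elem_sym (mu \o lift i) k.+1 + mu i * elem_sym (mu \o lift i) k.
Proof.
rewrite /elem_sym /elem_sym_poly (bigD1_ord i) //= mulrDl mul1r coefD.
by rewrite -scalerAl coefZ coefXM.
Qed.

Lemma elem_sym_eq0 n (mu : 'I_n -> R) k : (n < k)%N -> elem_sym mu k = 0.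
Proof.
elim: n mu k => [|n IH] mu [|k] //; first by rewrite /elem_sym /elem_sym_poly big_ord0 coef1.
by rewrite ltnS => nk; rewrite (elem_sym_lift _ ord0) !IH ?mulr0 ?addr0 // ltnW.
Qed.

Lemma count_pos_lift n (mu : 'I_n.+1 -> R) (i : 'I_n.+1) :
  count_pos mu = (nat_of_bool (0 < mu i)%R + count_pos (mu \o lift i))%N.
Proof. by rewrite /count_pos (bigD1_ord i). Qed.

Lemma sum_elem_sym_lift n (mu : 'I_n.+1 -> R) k :
  \sum_(i < n.+1) elem_sym (mu \o lift i) k = (n.+1 - k)%:R * elem_sym mu k.
Proof.
elim: n mu k => [|n IH] mu [|k].
- by rewrite big_ord1 !elem_sym0 mulr1.
- by rewrite big_ord1 elem_sym_eq0 // subSS sub0n mul0r.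
- by under eq_bigr do rewrite elem_sym0; rewrite elem_sym0 mulr1 sumr_const card_ord.
set mu' := mu \o lift ord0.
have split_lift (i : 'I_n.+1) : elem_sym (mu \o lift (lift ord0 i)) k.+1 =
    elem_sym (mu' \o lift i) k.+1 + mu ord0 * elem_sym (mu' \o lift i) k.
  have -> : ord0 = lift (lift ord0 i) ord0 by apply: val_inj.
  rewrite (elem_sym_lift _ ord0) /=.
  by congr (_ + _ * _); apply: eq_elem_sym => j /=; congr mu; apply: val_inj;
    rewrite /= /bump /= ltnS; case: leqP.
rewrite big_ord_recl; under eq_bigr do rewrite split_lift.
rewrite big_split /= -mulr_sumr !IH (elem_sym_lift mu ord0) -/mu'.
rewrite !subSS; have [kn|nk] := leqP k n.
  by rewrite (subSn kn) -natr1; ring.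
have [-> ->] : (n - k = 0 /\ n.+1 - k = 0)%N by lia.
by rewrite (@elem_sym_eq0 _ _ k.+1) // !mul0r mulr0 !addr0.
Qed.

Lemma elem_sym_ge0 n (mu : 'I_n -> R) k : (forall i, 0 <= mu i) -> 0 <= elem_sym mu k.
Proof.
elim: n mu k => [|n IH] mu [|k] mu_ge0; rewrite ?elem_sym0 ?ler01 //.
  by rewrite elem_sym_eq0.
have mu'_ge0 i : 0 <= (mu \o lift ord0) i by exact: mu_ge0.
by rewrite (elem_sym_lift _ ord0) addr_ge0 ?mulr_ge0 ?IH.
Qed.

Lemma elem_sym_gt0E n (mu : 'I_n -> R) k : (forall i, 0 <= mu i) ->
  (0 < elem_sym mu k) = (k <= count_pos mu)%N.
Proof.
elim: n mu k => [|n IH] mu [|k] mu_ge0; rewrite ?elem_sym0 ?ltr01 //.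
  by rewrite elem_sym_eq0 // ltxx /count_pos big_ord0.
set mu' := mu \o lift ord0.
have mu'_ge0 i : 0 <= mu' i by exact: mu_ge0.
have sym'_eq0 j : (count_pos mu' < j)%N -> elem_sym mu' j = 0.
  by move=> ?; apply/eqP; rewrite eq_le elem_sym_ge0 // andbT leNgt IH // -ltnNge.
rewrite (elem_sym_lift _ ord0) (count_pos_lift _ ord0) -/mu'.
have := mu_ge0 ord0; rewrite le_eqVlt => /orP[/eqP <- | mu0_gt0].
  by rewrite mul0r addr0 IH // ltxx.
rewrite mu0_gt0 add1n ltnS -IH //; apply/idP/idP => [|sym'_gt0]; last first.
  by rewrite ltr_wpDl ?elem_sym_ge0 ?mulr_gt0.
rewrite IH //; apply: contraLR; rewrite -ltnNge => lt_count.
by rewrite !sym'_eq0 ?mulr0 ?addr0 ?ltxx // ltnW.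
Qed.
End ElementarySymmetric.

Lemma newton_transfer (R : realFieldType) (p q N a0 a1 a2 s0 s1 s2 t0 t1 t2 : R) :
  0 < a1 -> 0 < a2 ->
  N * t0 = a0 * s0 -> N * t1 = a1 * s1 -> N * t2 = a2 * s2 ->
  p * a1 * (t0 * t2) <= q * a2 * t1 ^+ 2 -> p * a0 * (s0 * s2) <= q * a1 * s1 ^+ 2.
Proof.
move=> a1_gt0 a2_gt0 e0 e1 e2 ineq_t.
rewrite -(@ler_pM2r _ (a1 * a2)) ?mulr_gt0 //.
have -> : p * a0 * (s0 * s2) * (a1 * a2) = p * a1 * ((a0 * s0) * (a2 * s2)) by ring.
have -> : q * a1 * s1 ^+ 2 * (a1 * a2) = q * a2 * (a1 * s1) ^+ 2 by ring.
rewrite -e0 -e1 -e2.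
have -> : p * a1 * (N * t0 * (N * t2)) = N ^+ 2 * (p * a1 * (t0 * t2)) by ring.
have -> : q * a2 * (N * t1) ^+ 2 = N ^+ 2 * (q * a2 * t1 ^+ 2) by ring.
by rewrite ler_wpM2l ?sqr_ge0.
Qed.

Section Newton.
Variable R : realFieldType.

(* With [s = 1/t] this reads [(n+1) prod_i (s + nu_i) = d/ds prod_i (s + mu_i)]:
   the derivative of a real-rooted polynomial is real-rooted. *)
Hypothesis real_rooted_derivative : forall n (mu : 'I_n.+1 -> R),
  exists nu : 'I_n -> R,
    forall j, n.+1%:R * elem_sym nu j = (n.+1 - j)%:R * elem_sym mu j.

Lemma newton_top k (mu : 'I_k.+2 -> R) :
  k.+2%:R * 2%:R * (elem_sym mu k * elem_sym mu k.+2) <=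
  k.+1%:R * elem_sym mu k.+1 ^+ 2.
Proof.
elim: k mu => [|k IH] mu.
  rewrite !(elem_sym_lift _ ord0) !elem_sym0 !(@elem_sym_eq0 _ 0) //=.
  set x := mu ord0; set y := mu (lift ord0 ord0).
  by rewrite !(mulr0, mulr1, add0r, addr0); have := sqr_ge0 (x - y); nra.
rewrite !(elem_sym_lift mu ord0) (@elem_sym_eq0 _ _ _ k.+3) // add0r.
set x := mu ord0; have := IH (mu \o lift ord0).
set a := elem_sym _ k.+2; set b := elem_sym _ k.+1; set c := elem_sym _ k.
rewrite -[k.+3]addn3 -[k.+2]addn2 -[k.+1]addn1 !natrD => IH'.
have h1 : 0 <= x ^+ 2 * ((k%:R + 1) * b ^+ 2 - (k%:R + 2%:R) * 2%:R * (c * a)).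
  by rewrite mulr_ge0 ?sqr_ge0 // subr_ge0.
have h2 := sqr_ge0 ((k%:R + 2%:R) * a - x * b).
have k_ge0 : 0 <= k%:R :> R by rewrite ler0n.
nra.
Qed.

Lemma newton_ineq n (mu : 'I_n -> R) k : (k.+1 < n)%N ->
  k.+2%:R * (n - k)%:R * (elem_sym mu k * elem_sym mu k.+2) <=
  k.+1%:R * (n - k.+1)%:R * elem_sym mu k.+1 ^+ 2.
Proof.
elim: n mu k => [|n IH] mu k // lt_k_n.
have [def_n|ne_k_n] := eqVneq k.+1 n.
  subst n; have [-> ->] : (k.+2 - k = 2 /\ k.+2 - k.+1 = 1)%N by lia.
  by rewrite mulr1; exact: newton_top.
have [nu nuE] := real_rooted_derivative mu.
apply: (@newton_transfer _ _ _ n.+1%:R _ _ (n.+1 - k.+2)%:R _ _ _ (elem_sym nu k)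
  (elem_sym nu k.+1) (elem_sym nu k.+2)); rewrite ?nuE ?ltr0n ?subn_gt0 //.
- by move: ne_k_n; lia.
- by apply: IH; move: ne_k_n; lia.
Qed.

Lemma elem_sym_log_concave n (mu : 'I_n -> R) k :
  elem_sym mu k * elem_sym mu k.+2 <= elem_sym mu k.+1 ^+ 2.
Proof.
have [lt_k_n|le_n_k] := ltnP k.+1 n; last first.
  by rewrite (@elem_sym_eq0 _ _ _ k.+2) ?mulr0 ?sqr_ge0 // ltnS.
have := newton_ineq mu lt_k_n.
have [-> ->] : (n - k = (n - k.+2).+2 /\ n - k.+1 = (n - k.+2).+1)%N by lia.
rewrite -!natrM => newton.
have [p_le0|p_gt0] := lerP (elem_sym mu k * elem_sym mu k.+2) 0.
  by rewrite (le_trans p_le0) ?sqr_ge0.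
rewrite -(@ler_pM2l _ (k.+1 * (n - k.+2).+1)%:R) ?ltr0n ?muln_gt0 //.
by apply: le_trans newton; rewrite ler_pM2r // ler_nat; apply: leq_mul; apply: leqnSn.
Qed.

Lemma elem_sym_lift_gt0 n (mu : 'I_n.+1 -> R) m (i : 'I_n.+1) :
  (forall k, (0 < k <= m)%N -> 0 < elem_sym mu k) ->
  forall k, (k < m)%N -> 0 < elem_sym (mu \o lift i) k.
Proof.
move=> mu_pos; elim=> [|k IH] lt_k_m; first by rewrite elem_sym0 ltr01.
have := mu_pos k.+1 (ltnW lt_k_m); have := mu_pos k.+2 lt_k_m.
rewrite !(elem_sym_lift mu i); have := IH (ltnW lt_k_m).
have := elem_sym_log_concave (mu \o lift i) k.
set x := mu i; set s0 := elem_sym _ k; set s1 := elem_sym _ k.+1.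
set s2 := elem_sym _ k.+2 => concave s0_gt0 pos2 pos1.
have [x_le0|x_gt0] := lerP x 0; first by nra.
(* For [x > 0] and [s1 <= 0] both coefficients of [mu] force [s1^2 < s0 s2]. *)
rewrite ltNge; apply/negP => s1_le0.
have : s1 * s1 < s0 * s2 by nra.
nra.
Qed.
End Newton.

Section Restriction.
Variable R : realType.
Local Notation C := (complex R).
Local Notation "x %:C" := (real_complex R x).

Lemma conjmM p q r (A : 'M[C]_(p, q)) (B : 'M[C]_(q, r)) :
  conjm (A *m B) = conjm A *m conjm B.
Proof. exact: map_mxM. Qed.

Lemma conjmK p q (A : 'M[C]_(p, q)) : conjm (conjm A) = A.
Proof. by apply/matrixP => i j; rewrite !mxE conjCK. Qed.

Lemma conjm_tr p q (A : 'M[C]_(p, q)) : conjm A^T = (conjm A)^T.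
Proof. by rewrite /conjm map_trmx. Qed.

Lemma conjm1 p : conjm (1%:M : 'M[C]_p) = 1%:M.
Proof. by rewrite /conjm map_mx1. Qed.

Lemma unitmx_conjm p (P : 'M[C]_p) : (conjm P \in unitmx) = (P \in unitmx).
Proof. by rewrite !unitmxE det_map_mx !unitfE conjC_eq0. Qed.

Lemma restrM p q r (B : 'M[C]_(q, r)) (Q : 'M[C]_(p, q)) M :
  restr B (restr Q M) = restr (Q *m B) M.
Proof. by rewrite /restr trmx_mul conjmM !mulmxA. Qed.

Lemma restr1mx p (M : 'M[C]_p) : restr 1%:M M = M.
Proof. by rewrite /restr trmx1 mul1mx conjm1 mulmx1. Qed.

Lemma hform_restr p q (B : 'M[C]_(p, q)) M w :
  hform (restr B M) w = hform M (B *m w).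
Proof. by rewrite /hform /restr trmx_mul conjmM !mulmxA. Qed.

Lemma real11_restr p q (B : 'M[C]_(p, q)) M : real11 M -> real11 (restr B M).
Proof.
rewrite /real11 /restr => hM.
by rewrite !trmx_mul !conjmM trmxK hM conjm_tr conjmK mulmxA.
Qed.

Lemma real11_1 p : real11 (1%:M : 'M[C]_p).
Proof. by rewrite /real11 trmx1 conjm1. Qed.

Lemma kahler_restr p q (B : 'M[C]_(p, q)) W :
  kahler W -> (forall w : 'cV[C]_q, B *m w = 0 -> w = 0) -> kahler (restr B W).
Proof.
case=> W_real W_pos B_inj; split; first exact: real11_restr.
by move=> w w_neq0; rewrite hform_restr W_pos //; apply: contra w_neq0 => /eqP /B_inj ->.
Qed.

Definition rdiag p (l : 'I_p -> R) : 'M[C]_p := diag_mx (\row_i (l i)%:C).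

Lemma conjm_rdiag p (l : 'I_p -> R) : conjm (rdiag l) = rdiag l.
Proof.
apply/matrixP => i j; rewrite !mxE.
by case: (i == j); rewrite ?mulr1n ?mulr0n ?conjC0 //; exact: conjc_real.
Qed.

Lemma real11_rdiag p (l : 'I_p -> R) : real11 (rdiag l).
Proof. by rewrite /real11 conjm_rdiag /rdiag tr_diag_mx. Qed.

Lemma mul_rdiag p (l l' : 'I_p -> R) : rdiag l *m rdiag l' = rdiag (fun i => l i * l' i).
Proof.
by rewrite /rdiag mulmx_diag; congr diag_mx; apply/rowP => i; rewrite !mxE rmorphM.
Qed.

Lemma unitmx_rdiag p (l : 'I_p -> R) : (forall i, l i != 0) -> rdiag l \in unitmx.
Proof.
move=> l_neq0; rewrite unitmxE det_diag unitfE; apply/prodf_neq0 => i _.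
by rewrite mxE; apply: contra (l_neq0 i) => /eqP [->].
Qed.

Lemma hform_diag p (r : 'rV[C]_p) xi :
  hform (diag_mx r) xi = \sum_j r 0 j * (xi j 0 * (xi j 0)^*).
Proof.
rewrite /hform mul_mx_diag !mxE; apply: eq_bigr => j _; rewrite !mxE.
by rewrite mulrCA mulrA.
Qed.

Lemma hform_rdiag_delta p (l : 'I_p -> R) i : hform (rdiag l) (delta_mx i 0) = (l i)%:C.
Proof.
rewrite hform_diag (bigD1 i) //= big1 ?addr0.
  by rewrite !mxE !eqxx /= conjC1 !mulr1.
by move=> j /negbTE ji; rewrite !mxE ji /= ?mulr0n mul0r mulr0.
Qed.

Lemma hform1_gt0 p (y : 'cV[C]_p) : y != 0 -> 0 < hform 1%:M y.
Proof.
move=> y_neq0; rewrite -diag_const_mx hform_diag.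
have [r [c yrc_neq0]] := matrix_neq0_entry y_neq0; rewrite [c]ord1 in yrc_neq0.
rewrite (bigD1 r) //= ltr_wpDr ?mxE ?mul1r ?mul_conjC_gt0 //.
by apply: sumr_ge0 => i _; rewrite mxE mul1r mul_conjC_ge0.
Qed.

Lemma real11_spectral p (M : 'M[C]_p) : real11 M ->
  exists P : 'M[C]_p, exists d : 'I_p -> R,
    [/\ P \in unitmx, M = restr (conjm P) (rdiag d) & restr (conjm P) 1%:M = 1%:M].
Proof.
move=> M_real.
have M_herm : M \is hermsymmx.
  by apply/is_hermitianmxP; rewrite expr0 scale1r [M^T]M_real; apply/esym/conjmK.
have /orthomx_spectralP M_eq := hermitian_normalmx M_herm.
have P_unitary := spectral_unitarymx M.
exists (spectralmx M), (fun i => complex.Re (spectral_diag M 0 i)).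
have -> : rdiag (fun i => complex.Re (spectral_diag M 0 i)) = diag_mx (spectral_diag M).
  congr diag_mx; apply/rowP => i; rewrite mxE RRe_real //.
  exact: (mxOverP (hermitian_spectral_diag_real M_herm)).
rewrite /restr conjmK -conjm_tr mulmx1; split; first exact: spectral_unit.
  by rewrite {1}M_eq invmx_unitary.
by rewrite /conjm -(invmx_unitary P_unitary) mulVmx ?spectral_unit.
Qed.

(* Diagonalise [W] by [P1], rescale by the square roots of its (positive)
   eigenvalues to turn it into the identity, then diagonalise the transformed
   [A] by a unitary [P2], which keeps the identity fixed. *)
Lemma kahler_simultaneous_diag p (W A : 'M[C]_p) : kahler W -> real11 A ->
  exists Q : 'M[C]_p, exists l : 'I_p -> R,
    [/\ Q \in unitmx, W = restr Q 1%:M & A = restr Q (rdiag l)].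
Proof.
case=> W_real W_pos A_real.
have [P1 [w [P1_unit W_eq _]]] := real11_spectral W_real.
have w_gt0 i : 0 < w i.
  have := W_pos (invmx (conjm P1) *m delta_mx i 0).
  rewrite W_eq hform_restr mulKVmx ?unitmx_conjm // hform_rdiag_delta ltcR.
  apply; apply/eqP => /(congr1 (mulmx (conjm P1))).
  rewrite mulKVmx ?unitmx_conjm // mulmx0 => /matrixP /(_ i 0).
  by rewrite !mxE !eqxx => /eqP; rewrite oner_eq0.
pose S := rdiag (fun i => Num.sqrt (w i)).
have S_eq : restr S 1%:M = rdiag w.
  rewrite /restr mulmx1 conjm_rdiag tr_diag_mx mul_rdiag.
  by apply/matrixP => a b; rewrite !mxE -expr2 sqr_sqrtr // ltW.
pose Q1 := S *m conjm P1.
have Q1_unit : Q1 \in unitmx.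
  by rewrite unitmx_mul unitmx_conjm P1_unit unitmx_rdiag // => i; rewrite gt_eqF ?sqrtr_gt0.
have [P2 [l [P2_unit A_eq P2_1]]] := real11_spectral (real11_restr (invmx Q1) A_real).
exists (conjm P2 *m Q1), l; split.
- by rewrite unitmx_mul unitmx_conjm P2_unit.
- by rewrite -restrM P2_1 /Q1 -restrM S_eq -W_eq.
- by rewrite -restrM -A_eq restrM mulVmx // restr1mx.
Qed.
End Restriction.

Section Pencil.
Variable R : realType.
Local Notation C := (complex R).
Local Notation "x %:C" := (real_complex R x).

Definition polymx p q (M : 'M[C]_(p, q)) : 'M[{poly C}]_(p, q) := map_mx polyC M.

Definition pencil_det p (W A : 'M[C]_p) : {poly C} := \det (polymx W + 'X *: polymx A).

Lemma wedge_coefE p k (W A : 'M[C]_p) :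
  wedge_coef k A W = (k`! * (p - k)`!)%:R * (pencil_det W A)`_k.
Proof. by []. Qed.

Lemma pencil_det_coef0 p (W A : 'M[C]_p) : (pencil_det W A)`_0 = \det W.
Proof.
rewrite -horner_coef0 /pencil_det -horner_evalE -det_map_mx; congr (\det _).
apply/matrixP => i j; rewrite !mxE /= horner_evalE hornerD hornerM hornerX !hornerC.
by rewrite mul0r addr0.
Qed.

Lemma polymx_restr p q (B : 'M[C]_(p, q)) M :
  polymx (restr B M) = (polymx B)^T *m polymx M *m polymx (conjm B).
Proof. by rewrite /polymx /restr !map_mxM map_trmx. Qed.

Lemma det_restr_polymx p (P : 'M[C]_p) (M : 'M[{poly C}]_p) :
  \det ((polymx P)^T *m M *m polymx (conjm P)) = (\det P * (\det P)^*)%:P * \det M.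
Proof. by rewrite !det_mulmx det_tr /polymx !det_map_mx polyCM mulrAC. Qed.

Lemma polymx_pencil_restr p q (B : 'M[C]_(p, q)) W A :
  polymx (restr B W) + 'X *: polymx (restr B A) =
  (polymx B)^T *m (polymx W + 'X *: polymx A) *m polymx (conjm B).
Proof. by rewrite !polymx_restr mulmxDr mulmxDl -scalemxAr -scalemxAl. Qed.

Lemma pencil_det_restr p (P W A : 'M[C]_p) :
  pencil_det (restr P W) (restr P A) = (\det P * (\det P)^*)%:P * pencil_det W A.
Proof. by rewrite /pencil_det polymx_pencil_restr det_restr_polymx. Qed.

Lemma map_elem_sym_poly p (l : 'I_p -> R) :
  map_poly (real_complex R) (elem_sym_poly l) = \prod_i (1 + (l i)%:C%:P * 'X).
Proof.
rewrite rmorph_prod; apply: eq_bigr => i _.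
by rewrite -mul_polyC rmorphD rmorph1 rmorphM /= map_polyC map_polyX.
Qed.

Lemma pencil_det_diag_form p (Q : 'M[C]_p) (l : 'I_p -> R) :
  pencil_det (restr Q 1%:M) (restr Q (rdiag l)) =
  (\det Q * (\det Q)^*)%:P * map_poly (real_complex R) (elem_sym_poly l).
Proof.
rewrite pencil_det_restr map_elem_sym_poly /pencil_det /polymx map_mx1 map_diag_mx.
have -> : 1%:M + 'X *: diag_mx (map_mx polyC (\row_i (l i)%:C)) =
    diag_mx (\row_i (1 + (l i)%:C%:P * 'X)) :> 'M[{poly C}]_p.
  apply/matrixP => i j; rewrite !mxE.
  by case: (i == j); rewrite ?mulr1n ?mulr0n ?addr0 ?mulr0 ?add0r // mulrC.
by rewrite det_diag; under eq_bigr do rewrite mxE.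
Qed.

Lemma kahler_det_gt0 p (W : 'M[C]_p) : kahler W -> 0 < \det W.
Proof.
move=> W_kahler; have [Q [l [Q_unit -> _]]] := kahler_simultaneous_diag W_kahler W_kahler.1.
by rewrite /restr !det_mulmx det_tr det_map_mx det1 mulr1 mul_conjC_gt0 -unitfE -unitmxE.
Qed.
End Pencil.

Section Hyperplane.
Variable R : realType.
Local Notation C := (complex R).
Local Notation "x %:C" := (real_complex R x).

Lemma hyperplane_completion p (B : 'M[C]_(p.+1, p)) (v : 'rV[C]_p.+1) :
  v *m B = 0 -> v != 0 ->
  exists P : 'M[C]_p.+1, col' ord_max P = B /\ v *m P = delta_mx 0 ord_max.
Proof.
move=> vB0 v_neq0; have [o [r vr_neq0]] := matrix_neq0_entry v_neq0.
rewrite [o]ord1 in vr_neq0.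
pose x : 'cV[C]_p.+1 := (v 0 r)^-1 *: delta_mx r 0.
exists (\matrix_(i, j) oapp (B i) (x i 0) (unlift ord_max j)); split.
  by apply/matrixP => a b; rewrite !mxE liftK.
apply/rowP => j; rewrite !mxE; case: (unliftP ord_max j) => [j'|] -> /=.
  under eq_bigr do rewrite mxE liftK /=.
  by move/rowP: vB0 => /(_ j'); rewrite !mxE => ->; rewrite lift_eqF.
under eq_bigr do rewrite mxE unlift_none /=.
rewrite !eqxx (bigD1 r) //= big1 ?addr0 => [|k /negbTE kr].
  by rewrite !mxE !eqxx mulr1 mulfV.
by rewrite !mxE kr mulr0 mulr0.
Qed.

(* In the basis [P = (B | x)] of hyperplane_completion the form [v^T conj v]
   becomes the last diagonal unit and the restricted pencil is the
   complementary principal minor. *)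
Lemma pencil_det_hyperplane p (B : 'M[C]_(p.+1, p)) (v : 'rV[C]_p.+1) (W A : 'M[C]_p.+1) :
  v *m B = 0 -> v != 0 ->
  exists c : C, pencil_det (restr B W) (restr B A) =
    c%:P * (\det (polymx W + 'X *: polymx A + polymx (v^T *m conjm v)) - pencil_det W A).
Proof.
move=> vB0 v_neq0; have [P [PB vP]] := hyperplane_completion vB0 v_neq0.
have restr_minor M : restr B M = row' ord_max (col' ord_max (restr P M)).
  by rewrite /restr col'_mulmx !row'_mulmx -tr_col' /conjm -map_col' PB.
have restr_v : restr P (v^T *m conjm v) = delta_mx ord_max ord_max.
  rewrite /restr mulmxA -trmx_mul vP -mulmxA -conjmM vP.
  by rewrite /conjm map_delta_mx trmx_delta mul_delta_mx.
set Y := polymx (restr P W) + 'X *: polymx (restr P A).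
have Y_minor : row' ord_max (col' ord_max Y) =
    polymx (restr B W) + 'X *: polymx (restr B A).
  by rewrite !restr_minor; apply/matrixP => a b; rewrite !mxE.
have Y_delta : Y + delta_mx ord_max ord_max = (polymx P)^T *m
    (polymx W + 'X *: polymx A + polymx (v^T *m conjm v)) *m polymx (conjm P).
  have -> : delta_mx ord_max ord_max = polymx (restr P (v^T *m conjm v)).
    by rewrite restr_v /polymx map_delta_mx.
  by rewrite /Y polymx_pencil_restr polymx_restr -mulmxDl -mulmxDr.
exists (\det P * (\det P)^*).
have := det_add_delta_max Y; rewrite Y_delta Y_minor /Y polymx_pencil_restr.
by rewrite !det_restr_polymx /pencil_det mulrBr => ->; rewrite addrAC subrr add0r.
Qed.

Lemma pencil_det_hyperplane_diag p (B : 'M[C]_(p.+1, p)) (v z : 'rV[C]_p.+1)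
    (Q : 'M[C]_p.+1) (l : 'I_p.+1 -> R) :
  v *m B = 0 -> v != 0 -> z *m Q = v ->
  exists c : C, pencil_det (restr B (restr Q 1%:M)) (restr B (restr Q (rdiag l))) =
    c%:P * \sum_i ((z 0 i * (z 0 i)^*)%:P *
                   map_poly (real_complex R) (elem_sym_poly (l \o lift i))).
Proof.
move=> vB0 v_neq0 zQ.
have [c ->] := pencil_det_hyperplane (restr Q 1%:M) (restr Q (rdiag l)) vB0 v_neq0.
have -> : v^T *m conjm v = restr Q (z^T *m conjm z).
  by rewrite /restr -zQ trmx_mul conjmM !mulmxA.
rewrite polymx_pencil_restr polymx_restr -mulmxDl -mulmxDr det_restr_polymx.
rewrite pencil_det_diag_form map_elem_sym_poly.
have -> : polymx 1%:M + 'X *: polymx (rdiag l) + polymx (z^T *m conjm z) =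
    \matrix_(i, j) ((i == j)%:R * (1 + (l i)%:C%:P * 'X) + (z 0 i)%:P * ((z 0 j)^*)%:P).
  apply/matrixP => i j; rewrite !mxE big_ord1 !mxE polyCM.
  by case: (i == j); rewrite ?mulr1n ?mulr0n ?mul1r ?mul0r ?polyC1 ?polyC0 ?mulr0 ?add0r // (mulrC 'X).
rewrite det_diag_rank1 [X in _ * (X - _)]mulrDr addrAC subrr add0r.
exists (c * (\det Q * (\det Q)^*)); rewrite [in RHS]polyCM -mulrA; congr (_ * (_ * _)).
by apply: eq_bigr => i _; rewrite big_neq_lift map_elem_sym_poly polyCM.
Qed.

Lemma weighted_elem_sym_coef_gt0 p (c : C) (z : 'rV[C]_p.+1) (l : 'I_p.+1 -> R)
    (G : {poly C}) k :
  G = c%:P * \sum_i ((z 0 i * (z 0 i)^*)%:P *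
                      map_poly (real_complex R) (elem_sym_poly (l \o lift i))) ->
  0 < G`_0 -> (forall i, 0 <= elem_sym (l \o lift i) k) ->
  (exists2 i, z 0 i != 0 & 0 < elem_sym (l \o lift i) k) -> 0 < G`_k.
Proof.
move=> -> G0_gt0 sym_ge0 [i zi_neq0 symi_gt0].
have coefG j : (c%:P * \sum_i ((z 0 i * (z 0 i)^*)%:P *
    map_poly (real_complex R) (elem_sym_poly (l \o lift i))))`_j =
    c * \sum_i (z 0 i * (z 0 i)^*) * (elem_sym (l \o lift i) j)%:C.
  by rewrite coefCM coef_sum; congr (_ * _); apply: eq_bigr => i' _; rewrite coefCM coef_map.
move: G0_gt0; rewrite !coefG; under eq_bigr do rewrite elem_sym0 mulr1.
set N := \sum_i _ => G0_gt0.
have c_gt0 : 0 < c.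
  have N_neq0 : N != 0 by apply: contraTneq G0_gt0 => ->; rewrite mulr0 ltxx.
  by move: G0_gt0; rewrite pmulr_lgt0 // lt_def N_neq0 sumr_ge0 // => j _; exact: mul_conjC_ge0.
rewrite pmulr_rgt0 // (bigD1 i) //= ltr_wpDr //.
  by apply: sumr_ge0 => j _; rewrite mulr_ge0 ?mul_conjC_ge0 ?ler0c.
by rewrite mulr_gt0 ?mul_conjC_gt0 ?ltcR.
Qed.
End Hyperplane.

Section RealRootedDerivative.
Variable R : realType.
Local Notation C := (complex R).
Local Notation "x %:C" := (real_complex R x).

Lemma sum_zero_hyperplane_basis n : exists B : 'M[C]_(n.+1, n),
  (const_mx 1 : 'rV[C]_n.+1) *m B = 0 /\ forall w : 'cV[C]_n, B *m w = 0 -> w = 0.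
Proof.
exists (\matrix_(i, j) ((i == lift ord_max j)%:R - (i == ord_max)%:R)); split.
  have sum_delta (a : 'I_n.+1) : \sum_i ((i == a)%:R : C) = 1.
    by rewrite (bigD1 a) //= eqxx big1 ?addr0 // => i /negbTE ->.
  apply/rowP => j; rewrite !mxE; under eq_bigr do rewrite !mxE mul1r.
  by rewrite sumrB !sum_delta subrr.
move=> w /colP Bw0; apply/colP => a; have := Bw0 (lift ord_max a).
rewrite !mxE (bigD1 a) //= !mxE eqxx lift_eqF subr0 mul1r big1 ?addr0 // => b ba.
by rewrite !mxE lift_eqF subr0 (inj_eq lift_inj) eq_sym (negbTE ba) mul0r.
Qed.

(* [nu] is the spectrum of [diag mu] restricted to the hyperplane orthogonal
   to [(1, ..., 1)], computed in two ways. *)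
Lemma elem_sym_derivative n (mu : 'I_n.+1 -> R) : exists nu : 'I_n -> R,
  forall j, n.+1%:R * elem_sym nu j = (n.+1 - j)%:R * elem_sym mu j.
Proof.
have [B [vB0 B_inj]] := sum_zero_hyperplane_basis n.
have v_neq0 : (const_mx 1 : 'rV[C]_n.+1) != 0.
  by apply/eqP => /rowP /(_ ord0) /eqP; rewrite !mxE oner_eq0.
have W_kahler : kahler (restr B 1%:M).
  by apply: kahler_restr => //; split; [exact: real11_1 | exact: hform1_gt0].
have [Q [nu [Q_unit W_eq A_eq]]] :=
  kahler_simultaneous_diag W_kahler (real11_restr B (real11_rdiag mu)).
have [c] := pencil_det_hyperplane_diag mu vB0 v_neq0 (mulmx1 _).
rewrite !restr1mx W_eq A_eq pencil_det_diag_form.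
set d := \det Q * (\det Q)^* => pencil_eq.
have coef_eq j : d * (elem_sym nu j)%:C = c * ((n.+1 - j)%:R * elem_sym mu j)%:C.
  have := congr1 (fun P : {poly C} => P`_j) pencil_eq.
  rewrite /= coefCM coef_map coefCM coef_sum => ->; congr (_ * _).
  under eq_bigr do rewrite mxE conjC1 mulr1 polyC1 mul1r coef_map.
  by rewrite -rmorph_sum sum_elem_sym_lift.
have d_eq : d = c * n.+1%:R.
  by have := coef_eq 0%N; rewrite !elem_sym0 subn0 mulr1 rmorph1 mulr1 rmorph_nat.
have c_neq0 : c != 0.
  apply: contraTneq Q_unit => c0; move: d_eq; rewrite c0 mul0r.
  by rewrite unitmxE unitfE => /eqP; rewrite mul_conjC_eq0 => ->.
exists nu => j; apply: (@complexI R); apply: (mulfI c_neq0).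
by rewrite rmorphM rmorph_nat mulrA -d_eq coef_eq.
Qed.
End RealRootedDerivative.

Section DiagonalForm.
Variable R : realType.
Local Notation C := (complex R).
Variables (p : nat) (W A Q : 'M[C]_p.+1) (l : 'I_p.+1 -> R).
Hypotheses (W_kahler : kahler W) (Q_unit : Q \in unitmx).
Hypotheses (W_eq : W = restr Q 1%:M) (A_eq : A = restr Q (rdiag l)).

Lemma m_positive_elem_sym m : m_positive m W A ->
  forall k, (0 < k <= m)%N -> 0 < elem_sym l k.
Proof.
move=> posm k /posm; rewrite wedge_coefE W_eq A_eq pencil_det_diag_form coefCM coef_map.
rewrite pmulr_rgt0 ?ltr0n ?muln_gt0 ?fact_gt0 // pmulr_rgt0 ?ltcR //.
by rewrite mul_conjC_gt0 -unitfE -unitmxE.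
Qed.

Lemma coord_neq0 (v : 'rV[C]_p.+1) : v != 0 -> exists i, (v *m invmx Q) 0 i != 0.
Proof.
move=> v_neq0; have [|o [i zi_neq0]] := @matrix_neq0_entry _ _ _ (v *m invmx Q).
  by apply: contraNneq v_neq0 => z0; rewrite -(mulmxKV Q_unit v) z0 mul0mx.
by exists i; rewrite [o]ord1 in zi_neq0.
Qed.

Lemma restr_wedge_coef_gt0 k (B : 'M[C]_(p.+1, p)) (v : 'rV[C]_p.+1) :
  \rank B = p -> v != 0 -> v *m B = 0 ->
  (forall i, 0 <= elem_sym (l \o lift i) k) ->
  (exists2 i, (v *m invmx Q) 0 i != 0 & 0 < elem_sym (l \o lift i) k) ->
  0 < wedge_coef k (restr B A) (restr B W).
Proof.
move=> rankB v_neq0 vB0 sym_ge0 sym_gt0.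
have [c pencil_eq] := pencil_det_hyperplane_diag l vB0 v_neq0 (mulmxKV Q_unit v).
rewrite wedge_coefE pmulr_rgt0 ?ltr0n ?muln_gt0 ?fact_gt0 //.
rewrite W_eq A_eq (weighted_elem_sym_coef_gt0 pencil_eq) // -W_eq.
rewrite pencil_det_coef0 kahler_det_gt0 //.
by apply: kahler_restr => // w; exact: hyperplane_basis_inj.
Qed.

Lemma restr_wedge_coef_lt_m m k (B : 'M[C]_(p.+1, p)) : m_positive m W A ->
  (1 <= k <= m.-1)%N -> \rank B = p -> 0 < wedge_coef k (restr B A) (restr B W).
Proof.
move=> posm k_range rankB; have [v v_neq0 vB0] := hyperplane_normal rankB.
have sym_gt0 i := elem_sym_lift_gt0 (@elem_sym_derivative R) i (m_positive_elem_sym posm).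
have k_lt_m : (k < m)%N by case/andP: k_range => ? ?; lia.
apply: (restr_wedge_coef_gt0 rankB v_neq0 vB0) => [i|]; first exact/ltW/sym_gt0.
by have [i zi_neq0] := coord_neq0 v_neq0; exists i; last exact: sym_gt0.
Qed.

Lemma semipositive_diag_ge0 : semipositive A -> forall i, 0 <= l i.
Proof.
case=> _ A_ge0 i; have := A_ge0 (invmx Q *m delta_mx i 0).
by rewrite A_eq hform_restr mulKVmx // hform_rdiag_delta ler0c.
Qed.

Definition pos_support : 'M[C]_p.+1 := rdiag (fun i => (0 < l i)%R%:R).

Lemma rank_pos_support_lt : (count_pos l < p.+1)%N -> (\rank pos_support < p.+1)%N.
Proof.
move=> count_lt; rewrite ltn_neqAle rank_leq_row andbT; apply/eqP => rank_full.
have: pos_support \in unitmx by rewrite -row_free_unit /row_free rank_full.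
have [i l_i|all_pos] := pickP (fun i => ~~ (0 < l i)).
  by rewrite unitmxE det_diag unitfE (bigD1 i) //= mxE (negbTE l_i) mulr0n rmorph0 mul0r eqxx.
move: count_lt; rewrite /count_pos (eq_bigr (fun=> 1%N)) ?sum1_card ?card_ord ?ltnn //.
by move=> i _; move: (all_pos i) => /negbFE ->.
Qed.

Lemma semipositive_exceptional_subspace m : (1 <= m <= p)%N ->
  m_positive m W A -> semipositive A ->
  exists S : 'M[C]_p.+1, (\rank S < p.+1)%N /\
    forall v : 'rV[C]_p.+1, ~~ (v <= S)%MS ->
      forall B : 'M[C]_(p.+1, p), \rank B = p -> v *m B = 0 ->
        0 < wedge_coef m (restr B A) (restr B W).
Proof.
move=> m_range posm A_semi; have l_ge0 := semipositive_diag_ge0 A_semi.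
have m_le_count : (m <= count_pos l)%N.
  by rewrite -elem_sym_gt0E // (m_positive_elem_sym posm) // leqnn andbT; case/andP: m_range.
exists (if count_pos l == m then pos_support *m Q else 0); split.
  case: eqP => [count_m|]; last by rewrite mxrank0.
  by rewrite (leq_ltn_trans (mxrankM_maxl _ _)) // rank_pos_support_lt // count_m; lia.
move=> v v_notin_S B rankB vB0.
have v_neq0 : v != 0 by apply: contraNneq v_notin_S => ->; rewrite sub0mx.
have lift_ge0 i j : 0 <= (l \o lift i) j by exact: l_ge0.
apply: (restr_wedge_coef_gt0 rankB v_neq0 vB0) => [i|]; first exact: elem_sym_ge0.
set z := v *m invmx Q.
suff [i zi_neq0 m_le] : exists2 i, z 0 i != 0 & (m <= count_pos (l \o lift i))%N.
  by exists i; rewrite // elem_sym_gt0E.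
case: eqP v_notin_S => [count_m | count_neq_m] v_notin_S; last first.
  have [i zi_neq0] := coord_neq0 v_neq0; exists i => //.
  by move: count_neq_m m_le_count; rewrite (count_pos_lift l i); case: (0 < l i) => /=; lia.
have [i /andP[zi_neq0 l_i]|z_supp] := pickP (fun i => (z 0 i != 0) && ~~ (0 < l i)).
  by move: count_m; rewrite (count_pos_lift l i) (negbTE l_i) add0n => <-; exists i.
have zQ : z *m Q = v by rewrite mulmxKV.
clearbody z; case/negP: v_notin_S; rewrite -zQ.
have -> : z = z *m pos_support.
  apply/rowP => j; rewrite mul_mx_diag !mxE; case l_j: (0 < l j).
    by rewrite rmorph1 mulr1.
  rewrite mulr0n rmorph0 mulr0; apply/eqP.
  by have := z_supp j; rewrite /= l_j andbT => /negbFE.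
by rewrite -mulmxA submxMl.
Qed.
End DiagonalForm.

(* [B] is a basis of the hyperplane, as columns; [H_v = ker v]; the subspace
   [S(alpha)] is the row space of [S]. *)
Theorem lemma2p1 (R : realType) (n m : nat) (W A : 'M[complex R]_n) :
  kahler W -> real11 A -> (1 <= m <= n)%N -> m_positive m W A ->
  (forall k : nat, (1 <= k <= m.-1)%N ->
     forall B : 'M[complex R]_(n, n.-1), \rank B = n.-1 ->
       0 < wedge_coef k (restr B A) (restr B W))
  /\
  ((m <= n.-1)%N -> semipositive A ->
     exists S : 'M[complex R]_n,
       (\rank S < n)%N /\
       forall v : 'rV[complex R]_n, ~~ (v <= S)%MS ->
         forall B : 'M[complex R]_(n, n.-1),
           \rank B = n.-1 -> v *m B = 0 ->
           0 < wedge_coef m (restr B A) (restr B W)).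
Proof.
case: n W A => [|p] W A W_kahler A_real m_range posm.
  by case/andP: m_range => /leq_trans/[apply].
have [Q [l [Q_unit W_eq A_eq]]] := kahler_simultaneous_diag W_kahler A_real.
split=> [k k_range B rankB | m_le_p A_semi].
  exact: (restr_wedge_coef_lt_m W_kahler Q_unit W_eq A_eq posm).
apply: (semipositive_exceptional_subspace W_kahler Q_unit W_eq A_eq _ posm A_semi).
by case/andP: m_range => ->.
Qed.
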